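(* The family $R^{\mathrm{co}}_\lambda$, $\lambda>0$, defined by \[ R^{\mathrm{co}}_\lambda f=R^{\mathrm{du}}_\lambda f+\sum_{i\in\mathcal M}\sum_{j=1}^{\kappa(i)}u_{i,j}(f,\lambda)\,\ell^{i,j}_\lambda \] is a Feller resolvent on $C(S_{\mathrm u})$ (it satisfies the Hilbert equation, $\lambda R^{\mathrm{co}}_\lambda f\to f$ as $\lambda\to\infty$, the operators are non-negative and $\lambda R^{\mathrm{co}}_\lambda1_{S_{\mathrm u}}\le1_{S_{\mathrm u}}$). It is conservative (i.e. $\lambda R^{\mathrm{co}}_\lambda1_{S_{\mathrm u}}=1_{S_{\mathrm u}}$) if all $\mathfrak p_{i,j}$ are probability measures.
   Context: Let $S_1,\dots,S_N$ be disjoint compact metrizable separable spaces and $A_i$ generators of Feller semigroups (positive contraction semigroups, not necessarily conservative) on $C(S_i)$ with resolvents $R_{\lambda,i}=(\lambda-A_i)^{-1}$. Assume $A_1,\dots,A_M$ ($1\le M\le N$) are not conservative and $A_{M+1},\dots,A_N$ conservative. For $i\in\mathcal M=\{1,\dots,M\}$, assume the kernel of $A_i$ is trivial and there are continuous functions $\phi^{i,j}$, $j=1,\dots,\kappa(i)$, with $0\le\phi^{i,j}\le1_{S_i}$, $\lambda R_{\lambda,i}\phi^{i,j}\le\phi^{i,j}$ for all $\lambda>0$, $\lambda R_{\lambda,i}\phi^{i,j}\ne\phi^{i,j}$, and $\sum_{j=1}^{\kappa(i)}\phi^{i,j}=1_{S_i}$ (a regular Feller exit boundary with $\kappa(i)$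 exits). Let $\ell^{i,j}_\lambda=\phi^{i,j}-\lambda R_{\lambda,i}\phi^{i,j}$ (Laplace transforms of exit laws), $\mathcal{IJ}=\{(i,j):i\in\mathcal M,1\le j\le\kappa(i)\}$, $\kappa=\sum_{i\in\mathcal M}\kappa(i)$. Let $S_{\mathrm u}$ be the disjoint union of the $S_i$ (functions on $S_i$ extended by zero to $S_{\mathrm u}$; $f_i=f1_{S_i}$), $R^{\mathrm{du}}_\lambda f=\sum_{i=1}^NR_{\lambda,i}f_i$, and $\mathfrak p_{i,j}$, $(i,j)\in\mathcal{IJ}$, Borel sub-probability measures on $S_{\mathrm u}$ (distribution of the restart point after exiting $S_i$ through gate $j$). Let $N_\lambda:\mathbb R^\kappa\to\mathbb R^\kappa$, $(N_\lambda w)_{i,j}=\sum_{k\in\mathcal M}\sum_{l=1}^{\kappa(k)}w_{k,l}\int_{S_k}\ell^{k,l}_\lambda\,\mathrm d\mathfrak p_{i,j}$; then $\|N_\lambda\|<1$ and $M_\lambda=I-N_\lambda$ is invertible. For $f\in C(S_{\mathrm u})$, $u(f,\lambda)=M_\lambda^{-1}\big(\int_{S_{\mathrm u}}R^{\mathrm{du}}_\lambda f\,\mathrm d\mathfrak p_{i,j}\big)_{(i,j)\in\mathcal{IJ}}$. *)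

From HB Require Import structures.
From mathcomp Require Import all_boot all_order all_algebra.
From mathcomp Require Import all_classical all_reals all_analysis.
Set Implicit Arguments. Unset Strict Implicit. Unset Printing Implicit Defensive.
Import Order.TTheory GRing.Theory Num.Theory.
Import numFieldNormedType.Exports.
Local Open Scope classical_set_scope.
Local Open Scope ring_scope.

Definition Borel (T : ptopologicalType) := g_sigma_algebraType (@open T).

Section FellerDefs.
Context {R : realType} {T : pseudoPMetricType R}.

(* [feller_resolvent D Res] : the family [Res lam], lam > 0, is a Feller
   resolvent on C(D) (functions on D are represented as functions T -> R,
   only their values on D matter):
   - Res lam is an operator on C(D) (depends only on values on D, maps C(D)
     to C(D), linear),
   - Hilbert (resolvent) equation,
   - lam Res lam f -> f uniformly on D as lam -> oo,
   - non-negativity,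
   - lam Res lam 1 <= 1. *)
Definition feller_resolvent (D : set T) (Res : R -> (T -> R) -> T -> R) : Prop :=
  (forall (lam : R) (f g : T -> R), 0 < lam -> (forall x, D x -> f x = g x) ->
         forall x, D x -> Res lam f x = Res lam g x) /\
      (forall (lam : R) (f : T -> R), 0 < lam -> {within D, continuous f} ->
         {within D, continuous (Res lam f)}) /\
      (forall (lam : R) (a : R) (f g : T -> R), 0 < lam ->
         {within D, continuous f} -> {within D, continuous g} ->
         forall x, D x ->
           Res lam (fun y => a * f y + g y) x = a * Res lam f x + Res lam g x) /\
      (forall (lam mu : R) (f : T -> R), 0 < lam -> 0 < mu -> {within D, continuous f} ->
         forall x, D x ->
           Res lam f x - Res mu f x = (mu - lam) * Res lam (Res mu f) x) /\
      (forall f : T -> R, {within D, continuous f} ->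
         forall eps : R, 0 < eps -> exists L : R, forall lam : R, L < lam ->
           forall x, D x -> `|lam * Res lam f x - f x| < eps) /\
      (forall (lam : R) (f : T -> R), 0 < lam -> {within D, continuous f} ->
         (forall x, D x -> 0 <= f x) -> forall x, D x -> 0 <= Res lam f x) /\
      (forall lam : R, 0 < lam -> forall x, D x ->
         lam * Res lam (fun _ => 1) x <= 1).

Definition conservative (D : set T) (Res : R -> (T -> R) -> T -> R) : Prop :=
  forall lam : R, 0 < lam -> forall x, D x -> lam * Res lam (fun _ => 1) x = 1.

(* The generator
   is A (Res lam g) = lam Res lam g - g (independent of lam > 0), so
   ker A = 0 means: lam Res lam g = g on D forces Res lam g = 0 on D. *)
Definition trivial_kernel (D : set T) (Res : R -> (T -> R) -> T -> R) : Prop :=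
  forall (lam : R) (g : T -> R), 0 < lam -> {within D, continuous g} ->
    (forall x, D x -> lam * Res lam g x - g x = 0) ->
    forall x, D x -> Res lam g x = 0.

Section Construction.
Variables (N M : nat) (S : 'I_N -> set T)
  (Res : 'I_N -> R -> (T -> R) -> T -> R)
  (kappa : 'I_N -> nat) (phi : forall i : 'I_N, 'I_(kappa i) -> T -> R)
  (p : forall i : 'I_N, 'I_(kappa i) -> {measure set (Borel T) -> \bar R}).

(* the set IJ of pairs (i,j), i in {1..M} (0-based: i < M), 1 <= j <= kappa(i) *)
Definition IJ := {ij : {i : 'I_N & 'I_(kappa i)} | (tag ij < M)%N}.

Definition ijI (ij : IJ) : 'I_N := tag (val ij).
Definition ijJ (ij : IJ) : 'I_(kappa (ijI ij)) := tagged (val ij).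

Definition Rdu (lam : R) (f : T -> R) : T -> R :=
  fun x => \sum_(i < N) \1_(S i) x * Res i lam (fun y => \1_(S i) y * f y) x.

Definition ell (i : 'I_N) (j : 'I_(kappa i)) (lam : R) : T -> R :=
  fun x => \1_(S i) x * (phi j x - lam * Res i lam (phi j) x).

Definition Nmx (lam : R) : 'M[R]_#|{: IJ}| :=
  \matrix_(a, b)
    Rintegral (p (ijJ (enum_val a))) (S (ijI (enum_val b)))
              (ell (ijJ (enum_val b)) lam).

Definition bvec (f : T -> R) (lam : R) : 'cV[R]_#|{: IJ}| :=
  \col_a Rintegral (p (ijJ (enum_val a))) setT (Rdu lam f).

Definition u (f : T -> R) (lam : R) (ij : IJ) : R :=
  (invmx (1%:M - Nmx lam) *m bvec f lam) (enum_rank ij) ord0.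

Definition Rco (lam : R) (f : T -> R) : T -> R :=
  fun x => Rdu lam f x + \sum_(ij : IJ) u f lam ij * ell (ijJ ij) lam x.

End Construction.
End FellerDefs.

(* The matrix [N_lam] is nonnegative
   with row sums [\int \sum_ij ell^ij_lam dp_ij < 1]: on [S_i] the exit laws
   add up to [1 - lam R_lam,i 1], and [lam R_lam 1] is positive, hence bounded
   below on the compact space.  A minimum principle for [v = c + N_lam v] then
   gives invertibility and positivity, which yield [R^co_lam f >= 0] and, applied
   to [1 - lam u(1, lam)] (data [1 - p_ij(S_u)], zero in the probability case),
   [lam R^co_lam 1 <= 1] (resp. [= 1]).  The exit laws satisfy
   [ell_lam - ell_mu = (mu - lam) R^du_lam ell_mu]; together with the Hilbert
   equation of [R^du] this shows that [u(f, mu) + (mu - lam) u(R^co_mu f, lam)]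
   solves the system defining [u(f, lam)], whence the Hilbert equation of
   [R^co].  Finally, as [lam -> oo] the total exit law tends to [0] uniformly
   while [lam u(f, lam)] stays bounded, so [lam R^co_lam f -> f] uniformly. *)

From Pilot Require Import Defs.
From HB Require Import structures.
From mathcomp Require Import all_boot all_order all_algebra.
From mathcomp Require Import all_classical all_reals all_analysis.
From mathcomp Require Import measurable_realfun lra ring.
Import Order.TTheory GRing.Theory Num.Theory.
Import numFieldNormedType.Exports.
Local Open Scope classical_set_scope.
Local Open Scope ring_scope.

Set Implicit Arguments. Unset Strict Implicit. Unset Printing Implicit Defensive.

Section ContinuousFunctions.
Context {R : numFieldType}.

Lemma continuous_sum {T : topologicalType} (I : Type) (r : seq I) (P : pred I)
    (F : I -> T -> R) :
  (forall i, continuous (F i)) -> continuous (fun x => \sum_(i <- r | P i) F i x).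
Proof.
by move=> cF; apply: continuous_big => [|i _]; [exact: add_continuous|exact: cF].
Qed.

Lemma continuous_add {T : topologicalType} (f g : T -> R) :
  continuous f -> continuous g -> continuous (fun x => f x + g x).
Proof. by move=> cf cg x; exact: (continuousD (cf x) (cg x)). Qed.

Lemma continuous_sub {T : topologicalType} (f g : T -> R) :
  continuous f -> continuous g -> continuous (fun x => f x - g x).
Proof. by move=> cf cg x; exact: (continuousB (cf x) (cg x)). Qed.

Lemma continuous_cst_mul {T : topologicalType} c (f : T -> R) :
  continuous f -> continuous (fun x => c * f x).
Proof. by move=> cf x; exact: (continuousM (@cst_continuous _ _ c x) (cf x)). Qed.

Lemma within_continuous_sum {T : topologicalType} (A : set T) (I : Type)
    (r : seq I) (P : pred I) (F : I -> T -> R) :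
  (forall i, {within A, continuous F i}) ->
  {within A, continuous (fun x => \sum_(i <- r | P i) F i x)}.
Proof. by move=> cF; apply: (@continuous_sum (subspace A)). Qed.

Lemma within_continuous_sub {T : topologicalType} (A : set T) (f g : T -> R) :
  {within A, continuous f} -> {within A, continuous g} ->
  {within A, continuous (fun x => f x - g x)}.
Proof. by move=> cf cg; exact: (@continuous_sub (subspace A) f g cf cg). Qed.

Lemma within_continuous_cst_mul {T : topologicalType} (A : set T) c (f : T -> R) :
  {within A, continuous f} -> {within A, continuous (fun x => c * f x)}.
Proof. by move=> cf; exact: (@continuous_cst_mul (subspace A) c f cf). Qed.

End ContinuousFunctions.

Section CompactSpace.
Context {R : realType} {T : topologicalType}.
Hypothesis compactT : compact [set: T].
Implicit Types f : T -> R.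

Lemma compact_continuous_bounded f :
  continuous f -> exists B, forall x, `|f x| <= B.
Proof.
move=> cf.
have := continuous_compact (continuous_subspaceT cf) compactT.
move=> /compact_bounded [B [_ HB]].
by exists (B + 1) => x; apply: (HB (B + 1)); [rewrite ltrDl|exists x].
Qed.

Lemma compact_continuous_gt0_lbound f :
  continuous f -> (forall x, 0 < f x) -> exists2 m, 0 < m & forall x, m <= f x.
Proof.
move=> cf f_gt0.
have cVf : continuous (fun x => (f x)^-1).
  by move=> x; apply: cvgV; [rewrite gt_eqF|exact: cf].
have [B HB] := compact_continuous_bounded cVf.
have B1_gt0 : 0 < Num.max B 1 by rewrite lt_max ltr01 orbT.
exists (Num.max B 1)^-1; first by rewrite invr_gt0.
move=> x; rewrite -[f x]invrK lef_pV2 ?posrE ?invr_gt0 //.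
by rewrite le_max (le_trans (ler_norm _) (HB x)).
Qed.

End CompactSpace.

Lemma continuous_Borel_measurable {R : realType} {T : ptopologicalType}
    (f : T -> R) :
  continuous f -> measurable_fun (setT : set (Borel T)) f.
Proof.
move=> cf; apply: (measurability _ (RGenOpens.measurableE R)).
move=> _ [_ [a [b ->] <-]]; apply: sub_sigma_algebra; rewrite setTI.
by move/continuousP: cf; apply; exact: interval_open.
Qed.

Lemma continuous_indic_mul {R : realType} {T : topologicalType} (A : set T)
    (g : T -> R) :
  open A -> open (~` A) -> {within A, continuous g} ->
  continuous (fun x => \1_A x * g x).
Proof.
move=> oA oCA; rewrite continuous_open_subspace // => cg x.
have [Ax|nAx] := pselect (A x).
  rewrite /continuous_at indicE mem_set // mul1r.
  apply: cvg_trans (cg x (mem_set Ax)); apply: near_eq_cvg.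
  apply: filterS (open_nbhs_nbhs (conj oA Ax)) => y Ay /=.
  by rewrite indicE mem_set // mul1r.
rewrite /continuous_at indicE memNset // mul0r.
apply: (@cvg_trans _ ((fun=> (0 : R)) @ x)); last exact: cvg_cst.
apply: near_eq_cvg.
apply: filterS (open_nbhs_nbhs (conj oCA nAx)) => y Ay /=.
by rewrite indicE memNset // mul0r.
Qed.

Section SubstochasticMatrix.
Context {R : realFieldType} {n : nat} (A : 'M[R]_n).
Hypothesis A_ge0 : forall a b, 0 <= A a b.
Implicit Types v c : 'I_n -> R.

Lemma substochastic_fixpoint_norm_le v c (r C : R) :
  (forall a, \sum_b A a b <= r) ->
  (forall a, v a = c a + \sum_b A a b * v b) ->
  (forall a, `|c a| <= C) -> forall a, (1 - r) * `|v a| <= C.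
Proof.
move=> A_row v_fix c_le a0.
have [a _ v_max] := @arg_minP _ _ _ a0 xpredT (fun a => - `|v a|) isT.
have {}v_max b : `|v b| <= `|v a| by rewrite -lerN2 v_max.
have r_ge0 : 0 <= r by apply: le_trans (A_row a); apply: sumr_ge0.
have va_le : `|v a| <= C + r * `|v a|.
  rewrite {1}v_fix; apply: le_trans (ler_normD _ _) _; apply: lerD => //.
  apply: le_trans (ler_norm_sum _ _ _) _.
  apply: le_trans (_ : \sum_b A a b * `|v a| <= _).
    by apply: ler_sum => b _; rewrite normrM ger0_norm // ler_wpM2l.
  by rewrite -mulr_suml ler_wpM2r.
have C_ge0 : 0 <= C := le_trans (normr_ge0 _) (c_le a0).
have := v_max a0; have := normr_ge0 (v a0).
move: va_le; move: `|v a0| `|v a| => x y y_le x_ge0 xy.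
have [r1|r1] := lerP r 1; nra.
Qed.

Hypothesis A_row_lt1 : forall a, \sum_b A a b < 1.

(* Minimum principle: at a minimum [a] of [v], [v a >= (\sum_b A a b) * v a],
   which forces [v a >= 0] since the row sum is [< 1]. *)
Lemma substochastic_fixpoint_ge0 v c :
  (forall a, v a = c a + \sum_b A a b * v b) ->
  (forall a, 0 <= c a) -> forall a, 0 <= v a.
Proof.
move=> v_fix c_ge0 a0.
have [a _ v_min] := @arg_minP _ _ _ a0 xpredT v isT.
apply: le_trans (v_min a0 isT); rewrite leNgt; apply/negP => va_lt0.
have : (\sum_b A a b) * v a <= v a.
  rewrite [X in _ <= X]v_fix mulr_suml; apply: ler_wpDl => //.
  by apply: ler_sum => b _; apply: ler_wpM2l => //; exact: v_min.
by have := A_row_lt1 a; move: (\sum_b A a b) => s; nra.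
Qed.

Lemma substochastic_fixpoint_eq0 v :
  (forall a, v a = \sum_b A a b * v b) -> forall a, v a = 0.
Proof.
move=> v_fix a; apply/eqP; rewrite eq_le; apply/andP; split.
  rewrite -oppr_ge0; apply: (@substochastic_fixpoint_ge0 (fun a => - v a) 0) => //.
  by move=> b; rewrite add0r v_fix -sumrN; apply: eq_bigr => c _; rewrite mulrN.
by apply: (@substochastic_fixpoint_ge0 v 0) => // b; rewrite add0r.
Qed.

Lemma unitmx_1_sub : (1%:M - A) \in unitmx.
Proof.
rewrite unitmxE unitfE -det_tr; apply/negP => /det0P [w /negP w_neq0 wA].
apply: w_neq0; apply/eqP/rowP => a.
have -> : w 0 a = 0; last by rewrite mxE.
apply: (@substochastic_fixpoint_eq0 (fun a => w 0 a)) => {}a.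
have := congr1 (fun B : 'rV_n => B 0 a) wA; rewrite !mxE.
under eq_bigr => b _ do rewrite !mxE mulrBr.
rewrite sumrB (bigD1 a) //= big1 => [|b /negPf]; last first.
  by rewrite eq_sym => ->; rewrite mulr0.
rewrite eqxx mulr1 addr0 => /eqP; rewrite subr_eq0 => /eqP ->.
by apply: eq_bigr => b _; rewrite mulrC.
Qed.

Lemma invmx_1_sub_fixpoint (c : 'cV[R]_n) :
  invmx (1%:M - A) *m c = c + A *m (invmx (1%:M - A) *m c).
Proof.
apply/eqP; rewrite -subr_eq -{1}[invmx _ *m c]mul1mx -mulmxBl.
by rewrite mulKVmx ?unitmx_1_sub.
Qed.

End SubstochasticMatrix.

Section FellerResolventTheory.
Context {R : realType} {T : pseudoPMetricType R} (D : set T)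
  (Res : R -> (T -> R) -> T -> R).
Hypothesis feller : feller_resolvent D Res.
Implicit Types (lam mu a c B : R) (f g : T -> R).

Lemma res_local lam f g : 0 < lam -> (forall x, D x -> f x = g x) ->
  forall x, D x -> Res lam f x = Res lam g x.
Proof. by have [h _] := feller; apply: h. Qed.

Lemma res_continuous lam f : 0 < lam ->
  {within D, continuous f} -> {within D, continuous Res lam f}.
Proof. by have [_ [h _]] := feller; apply: h. Qed.

Lemma resL lam a f g : 0 < lam ->
  {within D, continuous f} -> {within D, continuous g} -> forall x, D x ->
  Res lam (fun y => a * f y + g y) x = a * Res lam f x + Res lam g x.
Proof. by have [_ [_ [h _]]] := feller; apply: h. Qed.

Lemma res_hilbert lam mu f : 0 < lam -> 0 < mu -> {within D, continuous f} ->
  forall x, D x ->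
  Res lam f x - Res mu f x = (mu - lam) * Res lam (Res mu f) x.
Proof. by have [_ [_ [_ [h _]]]] := feller; apply: h. Qed.

Lemma res_approx f : {within D, continuous f} -> forall eps, 0 < eps ->
  \forall lam \near +oo, forall x, D x -> `|lam * Res lam f x - f x| < eps.
Proof.
move=> cf eps eps_gt0; have [_ [_ [_ [_ [approx _]]]]] := feller.
have [L L_approx] := approx f cf eps eps_gt0.
by exists L; split; [exact: num_real|].
Qed.

Lemma res_ge0 lam f : 0 < lam -> {within D, continuous f} ->
  (forall x, D x -> 0 <= f x) ->
  forall x, D x -> 0 <= Res lam f x.
Proof. by have [_ [_ [_ [_ [_ [h _]]]]]] := feller; apply: h. Qed.

Lemma res1_le lam : 0 < lam -> forall x, D x -> lam * Res lam (fun=> 1) x <= 1.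
Proof. by have [_ [_ [_ [_ [_ [_ h]]]]]] := feller; apply: h. Qed.

Let within_cst c : {within D, continuous fun=> c}.
Proof. exact: cst_continuous. Qed.

Lemma res0 lam x : 0 < lam -> D x -> Res lam (fun=> 0) x = 0.
Proof.
move=> lam_gt0 Dx; have := resL 1 lam_gt0 (@within_cst 0) (@within_cst 0) Dx.
by under eq_fun do rewrite mul1r addr0; lra.
Qed.

Lemma resZ lam a f x : 0 < lam -> {within D, continuous f} -> D x ->
  Res lam (fun y => a * f y) x = a * Res lam f x.
Proof.
move=> lam_gt0 cf Dx; have := resL a lam_gt0 cf (@within_cst 0) Dx.
by under eq_fun do rewrite addr0; rewrite res0 // addr0.
Qed.

Lemma resD lam f g x : 0 < lam ->
  {within D, continuous f} -> {within D, continuous g} -> D x ->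
  Res lam (fun y => f y + g y) x = Res lam f x + Res lam g x.
Proof.
move=> lam_gt0 cf cg Dx; have := resL 1 lam_gt0 cf cg Dx.
by under eq_fun do rewrite mul1r; rewrite mul1r.
Qed.

Lemma resB lam f g x : 0 < lam ->
  {within D, continuous f} -> {within D, continuous g} -> D x ->
  Res lam (fun y => f y - g y) x = Res lam f x - Res lam g x.
Proof.
move=> lam_gt0 cf cg Dx; have := resL (-1) lam_gt0 cg cf Dx.
by under eq_fun do rewrite mulN1r addrC; rewrite mulN1r addrC.
Qed.

Lemma res_sum lam (I : Type) (r : seq I) (F : I -> T -> R) x : 0 < lam ->
  (forall i, {within D, continuous F i}) -> D x ->
  Res lam (fun y => \sum_(i <- r) F i y) x = \sum_(i <- r) Res lam (F i) x.
Proof.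
move=> lam_gt0 cF Dx; elim: r => [|i r IH].
  by under eq_fun do rewrite big_nil; rewrite big_nil res0.
under eq_fun do rewrite big_cons; rewrite big_cons resD ?IH //.
exact: within_continuous_sum.
Qed.

Lemma res_le lam f g x : 0 < lam ->
  {within D, continuous f} -> {within D, continuous g} ->
  (forall y, D y -> f y <= g y) -> D x -> Res lam f x <= Res lam g x.
Proof.
move=> lam_gt0 cf cg fg Dx; rewrite -subr_ge0 -resB //.
apply: res_ge0 => // [|y Dy]; last by rewrite subr_ge0 fg.
exact: within_continuous_sub.
Qed.

Lemma res_cst lam c x : 0 < lam -> D x ->
  Res lam (fun=> c) x = c * Res lam (fun=> 1) x.
Proof.
move=> lam_gt0 Dx; rewrite -(resZ c lam_gt0 (@within_cst 1) Dx).
by apply: res_local => // y _; rewrite mulr1.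
Qed.

Lemma res1_ge0 lam x : 0 < lam -> D x -> 0 <= Res lam (fun=> 1) x.
Proof. by move=> lam_gt0 Dx; apply: res_ge0. Qed.

Lemma res_norm_le lam f B x : 0 < lam -> {within D, continuous f} ->
  (forall y, D y -> `|f y| <= B) -> D x -> `|lam * Res lam f x| <= B.
Proof.
move=> lam_gt0 cf f_le Dx.
have B_ge0 : 0 <= B := le_trans (normr_ge0 _) (f_le x Dx).
have le_B : Res lam f x <= Res lam (fun=> B) x.
  by apply: res_le => // y Dy; exact: le_trans (ler_norm _) (f_le y Dy).
have ge_NB : Res lam (fun=> - B) x <= Res lam f x.
  apply: res_le => // y Dy; rewrite lerNl.
  by apply: le_trans (f_le y Dy); rewrite -normrN ler_norm.
rewrite [in X in _ <= X]res_cst // in le_B; rewrite res_cst // in ge_NB.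
have := res1_le lam_gt0 Dx; have := res1_ge0 lam_gt0 Dx.
move: (Res lam f x) (Res lam (fun=> 1) x) le_B ge_NB => v r *.
by rewrite ler_norml; apply/andP; split; nra.
Qed.

(* If [R_lam 1] vanished at [x], the Hilbert equation would make [R_mu 1]
   vanish at [x] for every [mu], contradicting [mu R_mu 1 --> 1]. *)
Lemma res1_gt0 lam x : 0 < lam -> D x -> 0 < Res lam (fun=> 1) x.
Proof.
move=> lam_gt0 Dx; rewrite lt_neqAle res1_ge0 // andbT eq_sym.
apply/negP => /eqP res1_eq0.
have res1_eq0_all mu : 0 < mu -> Res mu (fun=> 1) x = 0.
  move=> mu_gt0; have cR1 := res_continuous mu_gt0 (@within_cst 1).
  have RR1_eq0 : Res lam (Res mu (fun=> 1)) x = 0.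
    apply/eqP; rewrite eq_le; apply/andP; split.
      apply: le_trans (res_le (g := fun=> mu^-1) lam_gt0 cR1 (@within_cst _) _ Dx) _.
        by move=> y Dy; rewrite -(ler_pM2l mu_gt0) mulfV ?gt_eqF ?res1_le.
      by rewrite res_cst // res1_eq0 mulr0.
    by apply: res_ge0 => // y Dy; exact: res1_ge0.
  have := res_hilbert lam_gt0 mu_gt0 (@within_cst 1) Dx.
  by rewrite RR1_eq0 mulr0 res1_eq0 sub0r => /eqP; rewrite oppr_eq0 => /eqP.
have [L [_ HL]] := res_approx (@within_cst 1) (ltr01 : 0 < 1 :> R).
have L_lt : L < `|L| + 1 by apply: le_lt_trans (ler_norm L) _; rewrite ltrDl.
have := HL _ L_lt x Dx.
by rewrite res1_eq0_all ?mulr0 ?sub0r ?normrN ?normr1 ?ltxx // ltr_pwDr.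
Qed.

End FellerResolventTheory.

Section SubprobabilityIntegral.
Context {R : realType} {T : ptopologicalType}
  (mu : {measure set (Borel T) -> \bar R}).
Hypotheses (compactT : compact [set: T]) (mu_le1 : (mu [set: T] <= 1)%E).
Implicit Types (f : T -> R) (c B : R).

Lemma fine_measureT_le1 : fine (mu [set: T]) <= 1.
Proof.
by move: mu_le1 (measure_ge0 mu [set: T]); case: (mu _) => //= r; rewrite !lee_fin.
Qed.

Lemma continuous_integrable f : continuous f -> mu.-integrable [set: T] (EFin \o f).
Proof.
move=> cf; have mf := continuous_Borel_measurable cf.
apply/integrableP; split; first exact/measurable_EFinP.
have [B f_le] := compact_continuous_bounded compactT cf.
apply: le_lt_trans.
  apply: (@integral_le_bound _ _ _ mu _ (EFin \o f) `|B|%:E) => //.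
  - exact/measurable_EFinP.
  - by apply: aeW => x _; rewrite /= lee_fin (le_trans (f_le x)) // ler_norm.
by rewrite lte_mul_pinfty // (le_lt_trans mu_le1) // ltry.
Qed.

Lemma Rintegral_continuousD f g : continuous f -> continuous g ->
  Rintegral mu [set: T] (fun x => f x + g x) =
  Rintegral mu [set: T] f + Rintegral mu [set: T] g.
Proof. by move=> cf cg; rewrite RintegralD //; exact: continuous_integrable. Qed.

Lemma Rintegral_continuousB f g : continuous f -> continuous g ->
  Rintegral mu [set: T] (fun x => f x - g x) =
  Rintegral mu [set: T] f - Rintegral mu [set: T] g.
Proof. by move=> cf cg; rewrite RintegralB //; exact: continuous_integrable. Qed.

Lemma Rintegral_continuousZ c f : continuous f ->
  Rintegral mu [set: T] (fun x => c * f x) = c * Rintegral mu [set: T] f.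
Proof. by move=> cf; rewrite RintegralZl //; exact: continuous_integrable. Qed.

Lemma Rintegral_continuous_sum (I : Type) (r : seq I) (F : I -> T -> R) :
  (forall i, continuous (F i)) ->
  Rintegral mu [set: T] (fun x => \sum_(i <- r) F i x) =
  \sum_(i <- r) Rintegral mu [set: T] (F i).
Proof.
move=> cF; elim: r => [|i r IH].
  by under eq_fun do rewrite big_nil; rewrite big_nil Rintegral_cst // mul0r.
under eq_fun do rewrite big_cons.
by rewrite big_cons Rintegral_continuousD ?IH //; exact: continuous_sum.
Qed.

Lemma Rintegral_le_cst f c : continuous f -> 0 <= c -> (forall x, f x <= c) ->
  Rintegral mu [set: T] f <= c.
Proof.
move=> cf c_ge0 f_le; apply: le_trans (_ : Rintegral mu [set: T] (cst c) <= _).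
  apply: le_Rintegral => //; first exact: continuous_integrable.
  by apply: continuous_integrable; exact: cst_continuous.
by rewrite Rintegral_cst // ler_piMr ?fine_measureT_le1.
Qed.

Lemma Rintegral_norm_le f B : continuous f -> (forall x, `|f x| <= B) ->
  `|Rintegral mu [set: T] f| <= B.
Proof.
move=> cf f_le; have B_ge0 : 0 <= B := le_trans (normr_ge0 _) (f_le point).
apply: le_trans (le_normr_Rintegral _ _) _ => //.
  exact: continuous_integrable.
by apply: Rintegral_le_cst => // x; exact: cvg_norm (cf x).
Qed.

End SubprobabilityIntegral.

(* Keeps [phi i j] and [p i j] with an explicit [i], as in the statement. *)
Unset Implicit Arguments.

Section CompositeResolvent.
Context {R : realType} {T : pseudoPMetricType R} (N M : nat) (S : 'I_N -> set T)
  (Res : 'I_N -> R -> (T -> R) -> T -> R)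
  (kappa : 'I_N -> nat) (phi : forall i : 'I_N, 'I_(kappa i) -> T -> R)
  (p : forall i : 'I_N, 'I_(kappa i) -> {measure set (Borel T) -> \bar R}).
Hypotheses (compactT : compact [set: T])
  (S_disj : forall i j : 'I_N, i != j -> S i `&` S j = set0)
  (S_cover : \bigcup_(i in [set: 'I_N]) S i = [set: T])
  (S_open : forall i, open (S i))
  (feller : forall i, feller_resolvent (S i) (Res i))
  (conservative_ge : forall i : 'I_N, (M <= i)%N -> conservative (S i) (Res i))
  (phi_continuous : forall (i : 'I_N) (j : 'I_(kappa i)), (i < M)%N ->
     {within S i, continuous phi i j})
  (phi_excessive : forall (i : 'I_N) (j : 'I_(kappa i)), (i < M)%N ->
     forall lam : R, 0 < lam -> forall x, S i x ->
       lam * Res i lam (phi i j) x <= phi i j x)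
  (phi_sum : forall i : 'I_N, (i < M)%N ->
     forall x, S i x -> \sum_(j < kappa i) phi i j x = 1)
  (p_le1 : forall (i : 'I_N) (j : 'I_(kappa i)), (i < M)%N ->
     (p i j [set: T] <= 1)%E).

Set Implicit Arguments.

Local Notation Rdu := (Rdu S Res).
Local Notation ell := (ell S Res phi).
Implicit Types (lam mu : R) (f g : T -> R).

Lemma S_eq i k x : S i x -> S k x -> i = k.
Proof.
move=> Six Skx; apply/eqP/negPn/negP => /S_disj.
by rewrite -subset0 => /(_ x); apply.
Qed.

Lemma S_ex x : exists k, S k x.
Proof. by have : [set: T] x by []; rewrite -S_cover => -[k _ Skx]; exists k. Qed.

Lemma open_setC_S i : open (~` S i).
Proof.
have -> : ~` S i = \bigcup_(k in [set k | k != i]) S k.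
  apply/seteqP; split => x.
    move=> nSix; have [k Skx] := S_ex x; exists k => //=.
    by apply: contraPneq nSix => <-.
  by move=> [k /= ki Skx] Six; move/negP: ki; apply; rewrite (S_eq Skx Six).
by apply: bigcup_open => k _; exact: S_open.
Qed.

Lemma sum_indic_S k x (G : 'I_N -> R) : S k x -> \sum_i \1_(S i) x * G i = G k.
Proof.
move=> Skx; rewrite (bigD1 k) //= indicE mem_set // mul1r big1 ?addr0 // => i ik.
rewrite indicE memNset ?mul0r // => Six.
by move/negP: ik; apply; rewrite (S_eq Six Skx).
Qed.

Lemma continuous_indic_S i g :
  {within S i, continuous g} -> continuous (fun x => \1_(S i) x * g x).
Proof. exact/continuous_indic_mul/open_setC_S. Qed.

Lemma RduE k lam f x : 0 < lam -> S k x -> Rdu lam f x = Res k lam f x.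
Proof.
move=> lam_gt0 Skx; rewrite /Defs.Rdu (sum_indic_S _ Skx).
by apply: (res_local (feller k)) => // y Sky; rewrite indicE mem_set // mul1r.
Qed.

Lemma Rdu_continuous lam f : 0 < lam -> continuous f -> continuous (Rdu lam f).
Proof.
move=> lam_gt0 cf; apply: continuous_sum => i; apply: continuous_indic_S.
apply: (res_continuous (feller i)) => //; apply: continuous_subspaceT.
exact: continuous_indic_S (continuous_subspaceT cf).
Qed.

Lemma RduL lam a f g x : 0 < lam -> continuous f -> continuous g ->
  Rdu lam (fun y => a * f y + g y) x = a * Rdu lam f x + Rdu lam g x.
Proof.
move=> lam_gt0 cf cg; have [k Skx] := S_ex x; rewrite !(RduE _ lam_gt0 Skx).
by apply: (resL (feller k)) => //; exact: continuous_subspaceT.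
Qed.

Lemma RduD lam f g x : 0 < lam -> continuous f -> continuous g ->
  Rdu lam (fun y => f y + g y) x = Rdu lam f x + Rdu lam g x.
Proof.
move=> lam_gt0 cf cg; have [k Skx] := S_ex x; rewrite !(RduE _ lam_gt0 Skx).
by apply: (resD (feller k)) => //; exact: continuous_subspaceT.
Qed.

Lemma Rdu_sumZ lam (I : Type) (r : seq I) (c : I -> R) (F : I -> T -> R) x :
  0 < lam -> (forall i, continuous (F i)) ->
  Rdu lam (fun y => \sum_(i <- r) c i * F i y) x =
  \sum_(i <- r) c i * Rdu lam (F i) x.
Proof.
move=> lam_gt0 cF; have [k Skx] := S_ex x; rewrite (RduE _ lam_gt0 Skx).
rewrite (res_sum (feller k)) // => [|i]; last first.
  by apply: continuous_subspaceT; exact: continuous_cst_mul.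
apply: eq_bigr => i _; rewrite (resZ (feller k)) ?(RduE _ lam_gt0 Skx) //.
exact: continuous_subspaceT.
Qed.

Lemma Rdu_hilbert lam mu f x : 0 < lam -> 0 < mu -> continuous f ->
  Rdu lam f x - Rdu mu f x = (mu - lam) * Rdu lam (Rdu mu f) x.
Proof.
move=> lam_gt0 mu_gt0 cf; have [k Skx] := S_ex x.
rewrite !(RduE _ lam_gt0 Skx) (RduE _ mu_gt0 Skx) (res_hilbert (feller k)) //.
  congr (_ * _); apply: (res_local (feller k)) => // y Sky.
  by rewrite (RduE _ mu_gt0 Sky).
exact: continuous_subspaceT.
Qed.

Lemma Rdu_ge0 lam f x : 0 < lam -> continuous f -> (forall y, 0 <= f y) ->
  0 <= Rdu lam f x.
Proof.
move=> lam_gt0 cf f_ge0; have [k Skx] := S_ex x; rewrite (RduE _ lam_gt0 Skx).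
by apply: (res_ge0 (feller k)) => //; exact: continuous_subspaceT.
Qed.

Section ExitLaw.
Variables (i : 'I_N) (j : 'I_(kappa i)).
Hypothesis i_lt_M : (i < M)%N.

Let phi_ij_continuous : {within S i, continuous phi i j}.
Proof. exact: phi_continuous. Qed.

Lemma ell_in lam x : S i x -> ell j lam x = phi i j x - lam * Res i lam (phi i j) x.
Proof. by move=> Six; rewrite /Defs.ell indicE mem_set // mul1r. Qed.

Lemma ell_out lam x : ~ S i x -> ell j lam x = 0.
Proof. by move=> Six; rewrite /Defs.ell indicE memNset // mul0r. Qed.

Lemma ell_continuous lam : 0 < lam -> continuous (ell j lam).
Proof.
move=> lam_gt0; apply: continuous_indic_S; apply: within_continuous_sub => //.
by apply: within_continuous_cst_mul; exact: (res_continuous (feller i)).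
Qed.

Lemma ell_ge0 lam x : 0 < lam -> 0 <= ell j lam x.
Proof.
move=> lam_gt0; have [Six|Six] := pselect (S i x); last by rewrite ell_out.
by rewrite ell_in // subr_ge0; exact: phi_excessive.
Qed.

Lemma ell_hilbert lam mu x : 0 < lam -> 0 < mu ->
  ell j lam x - ell j mu x = (mu - lam) * Rdu lam (ell j mu) x.
Proof.
move=> lam_gt0 mu_gt0; have [k Skx] := S_ex x; rewrite (RduE _ lam_gt0 Skx).
have [Six|Six] := pselect (S i x); last first.
  rewrite !ell_out // (res_local (feller k) (g := fun=> 0)) ?(res0 (feller k)) //.
    by rewrite mulr0 subrr.
  by move=> y Sky; apply: ell_out => Siy; apply: Six; rewrite (S_eq Siy Sky).
have <- := S_eq Six Skx.
have cR := res_continuous (feller i) mu_gt0 phi_ij_continuous.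
rewrite (res_local (feller i)
    (g := fun y => phi i j y - mu * Res i mu (phi i j) y)) //;
  last by move=> y Siy; rewrite ell_in.
rewrite !ell_in // (resB (feller i)) //; last exact: within_continuous_cst_mul.
rewrite (resZ (feller i)) // mulrBr (mulrCA _ mu) -(res_hilbert (feller i)) //.
ring.
Qed.

End ExitLaw.

Local Notation n := #|{: IJ M kappa}|.
Local Notation Ell a lam := (ell (ijJ (enum_val a)) lam).
Local Notation Pa a := (p (ijI (enum_val a)) (ijJ (enum_val a))).
Local Notation Nmx := (Nmx M S Res phi p).
Local Notation bvec := (bvec M S Res p).
Local Notation Rco := (Rco M S Res phi p).
Implicit Types a b : 'I_n.

Lemma enum_val_lt_M a : (ijI (enum_val a) < M)%N.
Proof. exact: (valP (enum_val a)). Qed.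

Lemma Ell_continuous a lam : 0 < lam -> continuous (Ell a lam).
Proof. exact: ell_continuous (enum_val_lt_M a) lam. Qed.

Lemma Ell_ge0 a lam x : 0 < lam -> 0 <= Ell a lam x.
Proof. exact: ell_ge0 (enum_val_lt_M a) lam x. Qed.

Lemma Pa_le1 a : (Pa a [set: T] <= 1)%E.
Proof. exact/p_le1/enum_val_lt_M. Qed.

Let Pa_RintegralD a := Rintegral_continuousD compactT (Pa_le1 a).
Let Pa_RintegralB a := Rintegral_continuousB compactT (Pa_le1 a).
Let Pa_RintegralZ a := Rintegral_continuousZ compactT (Pa_le1 a).
Let Pa_Rintegral_sum a := Rintegral_continuous_sum compactT (Pa_le1 a).
Let Pa_Rintegral_le_cst a := Rintegral_le_cst compactT (Pa_le1 a).
Let Pa_Rintegral_norm_le a := Rintegral_norm_le compactT (Pa_le1 a).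

Lemma sum_IJ (F : IJ M kappa -> R) : \sum_ij F ij = \sum_(a < n) F (enum_val a).
Proof.
by rewrite -(big_enum_val (A := {: IJ M kappa})); apply: eq_bigl => ij; rewrite inE.
Qed.

Lemma sum_IJ_tag (F : forall i, 'I_(kappa i) -> R) :
  \sum_(ij : IJ M kappa) F (ijI ij) (ijJ ij) =
  \sum_(i < N | (i < M)%N) \sum_(j < kappa i) F i j.
Proof.
rewrite [RHS](sig_big_dep (fun i : 'I_N => (i < M)%N) (fun _ _ => true) F).
rewrite [RHS](reindex_omap (val : IJ M kappa -> _) insub) => [|ij /andP[ijM _]].
  by apply: eq_bigl => -[ij ijM] /=; rewrite ijM insubT /= eqxx.
by rewrite insubT.
Qed.

Definition ell_tot lam x := \sum_(a < n) Ell a lam x.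

Lemma ell_totE k lam x : 0 < lam -> S k x ->
  ell_tot lam x = if (k < M)%N then 1 - lam * Res k lam (fun=> 1) x else 0.
Proof.
move=> lam_gt0 Skx.
rewrite /ell_tot -(sum_IJ (fun ij => ell (ijJ ij) lam x)).
rewrite (sum_IJ_tag (fun i j => ell j lam x)).
have ell_out_k i (j : 'I_(kappa i)) : i != k -> ell j lam x = 0.
  by move=> ik; apply: ell_out => Six; move/negP: ik; apply; rewrite (S_eq Six Skx).
case: ifPn => [k_lt_M|k_ge_M]; last first.
  apply: big1 => i i_lt_M; apply: big1 => j _; apply: ell_out_k.
  by apply: contraNneq k_ge_M => <-.
rewrite (bigD1 k) //= [X in _ + X]big1 ?addr0; last first.
  by move=> i /andP[_ ik]; apply: big1 => j _; exact: ell_out_k.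
under eq_bigr => j _ do rewrite ell_in //.
rewrite sumrB phi_sum // -mulr_sumr -(res_sum (feller k)) // => [|j].
  by congr (_ - _ * _); apply: (res_local (feller k)) => // y Sky; rewrite phi_sum.
exact: phi_continuous.
Qed.

Lemma ell_tot_continuous lam : 0 < lam -> continuous (ell_tot lam).
Proof. by move=> lam_gt0; apply: continuous_sum => a; exact: Ell_continuous. Qed.

Lemma ell_tot_ge0 lam x : 0 < lam -> 0 <= ell_tot lam x.
Proof. by move=> lam_gt0; apply: sumr_ge0 => a _; exact: Ell_ge0. Qed.

Lemma ell_tot_lt1 lam : 0 < lam ->
  exists2 m, 0 < m & forall x, ell_tot lam x <= 1 - m.
Proof.
move=> lam_gt0.
have cR1 : continuous (fun x => lam * Rdu lam (fun=> 1) x).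
  by apply: continuous_cst_mul; apply: Rdu_continuous => //; exact: cst_continuous.
have R1_gt0 x : 0 < lam * Rdu lam (fun=> 1) x.
  have [k Skx] := S_ex x.
  by rewrite (RduE _ lam_gt0 Skx) mulr_gt0 // (res1_gt0 (feller k)).
have [m m_gt0 m_le] := compact_continuous_gt0_lbound compactT cR1 R1_gt0.
exists m => // x; have [k Skx] := S_ex x; rewrite (ell_totE lam_gt0 Skx).
have := m_le x; rewrite (RduE _ lam_gt0 Skx) => le_m.
have := res1_le (feller k) lam_gt0 Skx.
by case: ifP => _; lra.
Qed.

Lemma lam_Rdu1_add_ell_tot lam x : 0 < lam ->
  lam * Rdu lam (fun=> 1) x + ell_tot lam x = 1.
Proof.
move=> lam_gt0; have [k Skx] := S_ex x.
rewrite (RduE _ lam_gt0 Skx) (ell_totE lam_gt0 Skx).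
case: ifPn => [_|]; first lra.
by rewrite -leqNgt addr0 => /conservative_ge; apply.
Qed.

Lemma NmxE lam a b : Nmx lam a b = Rintegral (Pa a) [set: T] (Ell b lam).
Proof.
rewrite mxE [LHS]Rintegral_mkcond; apply: eq_Rintegral => x _.
rewrite patchE; case: ifPn => // /negP nSx.
by rewrite indicE memNset ?mul0r // => Sx; apply: nSx; exact: mem_set.
Qed.

Lemma Nmx_ge0 lam : 0 < lam -> forall a b, 0 <= Nmx lam a b.
Proof.
by move=> lam_gt0 a b; rewrite NmxE; apply: Rintegral_ge0 => x _; exact: Ell_ge0.
Qed.

Lemma Nmx_row_sum lam a : 0 < lam ->
  \sum_b Nmx lam a b = Rintegral (Pa a) [set: T] (ell_tot lam).
Proof.
move=> lam_gt0; under eq_bigr => b _ do rewrite NmxE.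
by rewrite Pa_Rintegral_sum // => b; exact: Ell_continuous.
Qed.

Lemma Nmx_row_lt1 lam : 0 < lam -> forall a, \sum_b Nmx lam a b < 1.
Proof.
move=> lam_gt0 a; rewrite Nmx_row_sum //.
have [m m_gt0 le_m] := ell_tot_lt1 lam_gt0.
have m_le1 : m <= 1 by have := le_m point; have := ell_tot_ge0 point lam_gt0; lra.
apply: le_lt_trans (_ : 1 - m < 1); last by rewrite ltrBlDr ltrDl.
by apply: Pa_Rintegral_le_cst; [exact: ell_tot_continuous|rewrite subr_ge0|].
Qed.

Lemma unitmx_1_sub_Nmx lam : 0 < lam -> (1%:M - Nmx lam) \in unitmx.
Proof.
by move=> lam_gt0; apply: unitmx_1_sub; [exact: Nmx_ge0|exact: Nmx_row_lt1].
Qed.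

Fact uvec_key : unit. Proof. by []. Qed.
Definition uvec f lam : 'cV[R]_n :=
  locked_with uvec_key (invmx (1%:M - Nmx lam) *m bvec f lam).

Lemma uvecE f lam : uvec f lam = invmx (1%:M - Nmx lam) *m bvec f lam.
Proof. exact: unlock. Qed.

Lemma uvec_fixpoint f lam : 0 < lam -> forall a,
  uvec f lam a 0 =
  Rintegral (Pa a) [set: T] (Rdu lam f) + \sum_b Nmx lam a b * uvec f lam b 0.
Proof.
move=> lam_gt0 a; rewrite [in LHS]uvecE invmx_1_sub_fixpoint -?uvecE.
- by rewrite !mxE.
- exact: Nmx_ge0.
- exact: Nmx_row_lt1.
Qed.

Lemma RcoE lam f x :
  Rco lam f x = Rdu lam f x + \sum_a uvec f lam a 0 * Ell a lam x.
Proof.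
rewrite /Defs.Rco /u sum_IJ; congr (_ + _).
by apply: eq_bigr => a _; rewrite enum_valK uvecE.
Qed.


Lemma Rco_continuous lam f : 0 < lam -> continuous f -> continuous (Rco lam f).
Proof.
move=> lam_gt0 cf.
have -> : Rco lam f =
    fun x => Rdu lam f x + \sum_(a < n) uvec f lam a 0 * Ell a lam x.
  by apply: funext => x; rewrite RcoE.
apply: continuous_add; first exact: Rdu_continuous.
by apply: continuous_sum => a; apply: continuous_cst_mul; exact: Ell_continuous.
Qed.

Lemma bvecL lam c f g : 0 < lam -> continuous f -> continuous g ->
  bvec (fun y => c * f y + g y) lam = c *: bvec f lam + bvec g lam.
Proof.
move=> lam_gt0 cf cg; apply/colP => a; rewrite !mxE.
transitivity (Rintegral (Pa a) [set: T] (fun x => c * Rdu lam f x + Rdu lam g x)).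
  by apply: eq_Rintegral => x _; exact: RduL.
have cRdu h : continuous h -> continuous (Rdu lam h) by exact: Rdu_continuous.
rewrite Pa_RintegralD ?Pa_RintegralZ //.
all: try apply: continuous_cst_mul; exact: cRdu.
Qed.

Lemma uvecL lam c f g : 0 < lam -> continuous f -> continuous g ->
  uvec (fun y => c * f y + g y) lam = c *: uvec f lam + uvec g lam.
Proof. by move=> lam_gt0 cf cg; rewrite !uvecE bvecL // mulmxDr scalemxAr. Qed.

Lemma RcoL lam c f g x : 0 < lam -> continuous f -> continuous g ->
  Rco lam (fun y => c * f y + g y) x = c * Rco lam f x + Rco lam g x.
Proof.
move=> lam_gt0 cf cg; rewrite !RcoE RduL // uvecL //.
under eq_bigr => a _ do rewrite !mxE mulrDl -mulrA.
by rewrite big_split /= -mulr_sumr; ring.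
Qed.

Lemma Rdu_Rco_hilbert lam mu f x : 0 < lam -> 0 < mu -> continuous f ->
  (mu - lam) * Rdu lam (Rco mu f) x =
  Rdu lam f x - Rdu mu f x +
  \sum_(a < n) uvec f mu a 0 * (Ell a lam x - Ell a mu x).
Proof.
move=> lam_gt0 mu_gt0 cf.
have -> : Rco mu f = fun y => Rdu mu f y + \sum_(a < n) uvec f mu a 0 * Ell a mu y.
  by apply: funext => y; rewrite RcoE.
rewrite RduD //; first last.
- by apply: continuous_sum => a; apply: continuous_cst_mul; exact: Ell_continuous.
- exact: Rdu_continuous.
rewrite Rdu_sumZ // => [|a]; last exact: Ell_continuous.
rewrite mulrDr -Rdu_hilbert // mulr_sumr; congr (_ + _); apply: eq_bigr => a _.
by rewrite mulrCA -ell_hilbert // enum_val_lt_M.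
Qed.

Lemma Nmx_uvec_hilbert lam mu f : 0 < lam -> 0 < mu -> continuous f ->
  (1%:M - Nmx lam) *m uvec f mu + (mu - lam) *: bvec (Rco mu f) lam = bvec f lam.
Proof.
move=> lam_gt0 mu_gt0 cf; apply/colP => a; rewrite mulmxBl mul1mx !mxE.
have cRdu nu : 0 < nu -> continuous (Rdu nu f).
  by move=> nu_gt0; exact: Rdu_continuous.
have cEll b : continuous (fun y => Ell b lam y - Ell b mu y).
  by apply: continuous_sub; exact: Ell_continuous.
have cterm b : continuous (fun y => uvec f mu b 0 * (Ell b lam y - Ell b mu y)).
  exact: continuous_cst_mul.
have int_sum : Rintegral (Pa a) [set: T]
      (fun y => \sum_b uvec f mu b 0 * (Ell b lam y - Ell b mu y)) =
    \sum_b Nmx lam a b * uvec f mu b 0 - \sum_b Nmx mu a b * uvec f mu b 0.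
  rewrite Pa_Rintegral_sum // -sumrB; apply: eq_bigr => b _.
  rewrite Pa_RintegralZ //.
  rewrite (Pa_RintegralB _ (@Ell_continuous b _ lam_gt0)
                            (@Ell_continuous b _ mu_gt0)).
  by rewrite !NmxE mulrBr !(mulrC (uvec f mu b 0)).
rewrite -Pa_RintegralZ; last exact/Rdu_continuous/Rco_continuous.
under eq_Rintegral do rewrite Rdu_Rco_hilbert //.
rewrite Pa_RintegralD; first last.
- exact: continuous_sum.
- by apply: continuous_sub; exact: cRdu.
rewrite (Pa_RintegralB _ (cRdu _ lam_gt0) (cRdu _ mu_gt0)) int_sum.
by rewrite uvec_fixpoint //; ring.
Qed.

Lemma uvec_hilbert lam mu f : 0 < lam -> 0 < mu -> continuous f ->
  uvec f lam = uvec f mu + (mu - lam) *: uvec (Rco mu f) lam.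
Proof.
move=> lam_gt0 mu_gt0 cf; rewrite [LHS]uvecE -(Nmx_uvec_hilbert lam_gt0 mu_gt0 cf).
by rewrite mulmxDr mulKmx ?unitmx_1_sub_Nmx // -scalemxAr -uvecE.
Qed.

Lemma Rco_hilbert lam mu f x : 0 < lam -> 0 < mu -> continuous f ->
  Rco lam f x - Rco mu f x = (mu - lam) * Rco lam (Rco mu f) x.
Proof.
move=> lam_gt0 mu_gt0 cf.
have uvec_diff a :
    (mu - lam) * uvec (Rco mu f) lam a 0 = uvec f lam a 0 - uvec f mu a 0.
  by rewrite (uvec_hilbert lam_gt0 mu_gt0 cf) !mxE; ring.
rewrite !RcoE mulrDr Rdu_Rco_hilbert // mulr_sumr.
under [X in _ = _ + X]eq_bigr => a _ do rewrite mulrA uvec_diff.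
have -> : \sum_a uvec f mu a 0 * (Ell a lam x - Ell a mu x) =
    \sum_a uvec f mu a 0 * Ell a lam x - \sum_a uvec f mu a 0 * Ell a mu x.
  by rewrite -sumrB; apply: eq_bigr => a _; rewrite mulrBr.
have -> : \sum_a (uvec f lam a 0 - uvec f mu a 0) * Ell a lam x =
    \sum_a uvec f lam a 0 * Ell a lam x - \sum_a uvec f mu a 0 * Ell a lam x.
  by rewrite -sumrB; apply: eq_bigr => a _; rewrite mulrBl.
ring.
Qed.

Lemma uvec_ge0 lam f : 0 < lam -> continuous f -> (forall x, 0 <= f x) ->
  forall a, 0 <= uvec f lam a 0.
Proof.
move=> lam_gt0 cf f_ge0.
apply: (substochastic_fixpoint_ge0 (Nmx_ge0 lam_gt0) (Nmx_row_lt1 lam_gt0)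
  (uvec_fixpoint f lam_gt0)).
by move=> a; apply: Rintegral_ge0 => x _; exact: Rdu_ge0.
Qed.

Lemma Rco_ge0 lam f x : 0 < lam -> continuous f -> (forall y, 0 <= f y) ->
  0 <= Rco lam f x.
Proof.
move=> lam_gt0 cf f_ge0; rewrite RcoE addr_ge0 ?Rdu_ge0 //.
by apply: sumr_ge0 => a _; rewrite mulr_ge0 ?uvec_ge0 ?Ell_ge0.
Qed.

Lemma lam_Rco1E lam x : 0 < lam ->
  lam * Rco lam (fun=> 1) x =
  1 - \sum_a (1 - lam * uvec (fun=> 1) lam a 0) * Ell a lam x.
Proof.
move=> lam_gt0; rewrite RcoE mulrDr.
have -> : lam * Rdu lam (fun=> 1) x = 1 - ell_tot lam x.
  by rewrite -[in RHS](lam_Rdu1_add_ell_tot x lam_gt0) addrK.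
have -> : \sum_a (1 - lam * uvec (fun=> 1) lam a 0) * Ell a lam x =
    ell_tot lam x - lam * \sum_a uvec (fun=> 1) lam a 0 * Ell a lam x.
  by rewrite mulr_sumr -sumrB; apply: eq_bigr => a _; rewrite mulrBl mul1r mulrA.
ring.
Qed.

Lemma one_sub_lam_uvec1_fixpoint lam : 0 < lam -> forall a,
  1 - lam * uvec (fun=> 1) lam a 0 =
  (1 - fine (Pa a [set: T])) +
  \sum_b Nmx lam a b * (1 - lam * uvec (fun=> 1) lam b 0).
Proof.
move=> lam_gt0 a.
have cRdu1 : continuous (Rdu lam (fun=> 1)).
  by apply: Rdu_continuous => //; exact: cst_continuous.
have int_Rdu1 : lam * Rintegral (Pa a) [set: T] (Rdu lam (fun=> 1)) +
    \sum_b Nmx lam a b = fine (Pa a [set: T]).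
  rewrite Nmx_row_sum // -Pa_RintegralZ // -Pa_RintegralD; first last.
  - exact: ell_tot_continuous.
  - exact: continuous_cst_mul.
  under eq_Rintegral do rewrite lam_Rdu1_add_ell_tot //.
  by rewrite Rintegral_cst // mul1r.
rewrite uvec_fixpoint // -int_Rdu1.
under [X in _ = _ + X]eq_bigr => b _ do rewrite mulrBr mulr1 mulrCA.
by rewrite sumrB -mulr_sumr; ring.
Qed.

Lemma Rco1_le lam x : 0 < lam -> lam * Rco lam (fun=> 1) x <= 1.
Proof.
move=> lam_gt0; rewrite lam_Rco1E // lerBlDr lerDl.
apply: sumr_ge0 => a _; rewrite mulr_ge0 ?Ell_ge0 //.
apply: (substochastic_fixpoint_ge0 (Nmx_ge0 lam_gt0) (Nmx_row_lt1 lam_gt0)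
  (one_sub_lam_uvec1_fixpoint lam_gt0)) => b.
by rewrite subr_ge0 fine_measureT_le1 // Pa_le1.
Qed.

Lemma Rco1_eq lam x : 0 < lam ->
  (forall (i : 'I_N) (j : 'I_(kappa i)), (i < M)%N -> p i j [set: T] = 1%E) ->
  lam * Rco lam (fun=> 1) x = 1.
Proof.
move=> lam_gt0 p_eq1; rewrite lam_Rco1E // big1 ?subr0 // => a _.
suff -> : 1 - lam * uvec (fun=> 1) lam a 0 = 0 by rewrite mul0r.
apply: (substochastic_fixpoint_eq0 (Nmx_ge0 lam_gt0) (Nmx_row_lt1 lam_gt0)
  (v := fun a => 1 - lam * uvec (fun=> 1) lam a 0)) => b.
by rewrite one_sub_lam_uvec1_fixpoint // p_eq1 ?enum_val_lt_M // subrr add0r.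
Qed.

Lemma Rdu_approx f eps : continuous f -> 0 < eps ->
  \forall lam \near +oo, forall x, `|lam * Rdu lam f x - f x| < eps.
Proof.
move=> cf eps_gt0.
have res_near : \forall lam \near +oo, forall k x, S k x ->
    `|lam * Res k lam f x - f x| < eps.
  apply: filter_forall => k.
  have := res_approx (feller k) (continuous_subspaceT cf) eps_gt0.
  by apply: filterS => lam + x; apply.
apply: filterS2 (nbhs_pinfty_gt (num_real 0)) res_near => lam lam_gt0 res_lam x.
by have [k Skx] := S_ex x; rewrite (RduE _ lam_gt0 Skx); exact: res_lam.
Qed.

Lemma ell_tot_near0 d : 0 < d ->
  \forall lam \near +oo, forall x, ell_tot lam x <= d.
Proof.
move=> d_gt0.
have res1_near : \forall lam \near +oo, forall k x, S k x ->
    `|lam * Res k lam (fun=> 1) x - 1| < d.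
  apply: filter_forall => k.
  have := res_approx (feller k) (continuous_subspaceT (@cst_continuous T R 1))
    d_gt0.
  by apply: filterS => lam + x; apply.
apply: filterS2 (nbhs_pinfty_gt (num_real 0)) res1_near => lam lam_gt0 res1_lam x.
have [k Skx] := S_ex x; rewrite (ell_totE lam_gt0 Skx).
case: ifP => _; last exact: ltW.
by apply: le_trans (ltW (res1_lam k x Skx)); rewrite distrC ler_norm.
Qed.

Lemma lam_uvec_norm_le lam f B : 0 < lam -> continuous f ->
  (forall x, `|f x| <= B) ->
  (forall x, ell_tot lam x <= 2^-1) -> forall a, `|lam * uvec f lam a 0| <= 2 * B.
Proof.
move=> lam_gt0 cf f_le ell_le a.
have row_le b : \sum_c Nmx lam b c <= 2^-1.
  rewrite Nmx_row_sum //; apply: Pa_Rintegral_le_cst => //.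
  exact: ell_tot_continuous.
have data_le b : `|Rintegral (Pa b) [set: T] (Rdu lam f)| <= lam^-1 * B.
  apply: Pa_Rintegral_norm_le => [|y]; first exact: Rdu_continuous.
  have [k Sky] := S_ex y; rewrite (RduE _ lam_gt0 Sky).
  have inv_ge0 : 0 <= lam^-1 by rewrite invr_ge0 ltW.
  rewrite -[Res k lam f y](mulKf (lt0r_neq0 lam_gt0)) normrM (ger0_norm inv_ge0).
  rewrite ler_pM2l ?invr_gt0 //.
  apply: (res_norm_le (feller k) lam_gt0 (continuous_subspaceT cf) _ Sky).
  by move=> z _; exact: f_le.
have := substochastic_fixpoint_norm_le (Nmx_ge0 lam_gt0) row_le
  (uvec_fixpoint f lam_gt0) data_le a.
have -> : 1 - 2^-1 = 2^-1 :> R by rewrite {1}(splitr 1) div1r addrK.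
move=> half_le; rewrite normrM gtr0_norm //.
apply: le_trans (_ : lam * (2 * (lam^-1 * B)) <= _).
  by rewrite ler_pM2l // -ler_pdivrMl // mulrC.
by rewrite mulrCA mulVKf ?gt_eqF.
Qed.

Lemma Rco_approx f eps : continuous f -> 0 < eps ->
  \forall lam \near +oo, forall x, `|lam * Rco lam f x - f x| < eps.
Proof.
move=> cf eps_gt0.
have [B f_le] := compact_continuous_bounded compactT cf.
have B_ge0 : 0 <= B := le_trans (normr_ge0 _) (f_le point).
pose q := eps / (4 * (B + 1)); pose d := Num.min 2^-1 q.
have q_gt0 : 0 < q by rewrite divr_gt0 // mulr_gt0 // ltr_pwDr.
have q_eps : q * (4 * (B + 1)) = eps.
  by rewrite mulfVK // gt_eqF // mulr_gt0 // ltr_pwDr.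
have d_gt0 : 0 < d by rewrite lt_min q_gt0 invr_gt0 ltr0n.
have d_le_half : d <= 2^-1 by rewrite ge_min lexx.
have Bd_lt : 2 * B * d < eps / 2.
  apply: le_lt_trans (_ : 2 * B * q < _).
    by rewrite ler_wpM2l ?mulr_ge0 // ge_min lexx orbT.
  by rewrite -q_eps; nra.
near=> lam.
have lam_gt0 : 0 < lam by near: lam; exact: nbhs_pinfty_gt.
have ell_le : forall x, ell_tot lam x <= d by near: lam; exact: ell_tot_near0.
have Rdu_close : forall x, `|lam * Rdu lam f x - f x| < eps / 2.
  by near: lam; apply: Rdu_approx => //; rewrite divr_gt0.
move=> x.
have u_le := lam_uvec_norm_le lam_gt0 cf f_le
  (fun y => le_trans (ell_le y) d_le_half).
have sum_le : `|lam * \sum_a uvec f lam a 0 * Ell a lam x| <= 2 * B * d.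
  rewrite mulr_sumr; apply: le_trans (ler_norm_sum _ _ _) _.
  apply: le_trans (_ : \sum_a 2 * B * Ell a lam x <= _).
    apply: ler_sum => a _; rewrite mulrA normrM (ger0_norm (Ell_ge0 _ _ lam_gt0)).
    by apply: ler_wpM2r; [exact: Ell_ge0|exact: u_le].
  by rewrite -mulr_sumr ler_wpM2l ?mulr_ge0 // ell_le.
rewrite RcoE mulrDr addrAC; apply: le_lt_trans (ler_normD _ _) _.
by have := Rdu_close x; lra.
Unshelve. all: by end_near.
Qed.

Lemma Rco_feller_resolvent : feller_resolvent [set: T] Rco.
Proof.
have within_setT (f : T -> R) := iffRL (continuous_subspace_setT f).
split.
  by move=> lam f g _ fg x _; congr (Rco lam _ x); apply: funext => y; exact: fg.
split.
  move=> lam f lam_gt0 /within_setT cf.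
  by apply/(continuous_subspace_setT (Rco lam f)); exact: Rco_continuous.
split.
  by move=> lam c f g lam_gt0 /within_setT cf /within_setT cg x _; exact: RcoL.
split.
  by move=> lam mu f lam_gt0 mu_gt0 /within_setT cf x _; exact: Rco_hilbert.
split.
  move=> f /within_setT cf eps eps_gt0.
  by have [L [_ approx]] := Rco_approx cf eps_gt0; exists L => lam /approx.
split.
  move=> lam f lam_gt0 /within_setT cf f_ge0 x _.
  by apply: Rco_ge0 => // y; exact: f_ge0.
by move=> lam lam_gt0 x _; exact: Rco1_le.
Qed.

Lemma Rco_conservative :
  (forall (i : 'I_N) (j : 'I_(kappa i)), (i < M)%N -> p i j [set: T] = 1%E) ->
  conservative [set: T] Rco.
Proof. by move=> p_eq1 lam lam_gt0 x _; exact: Rco1_eq. Qed.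

End CompositeResolvent.

Theorem theorem5 (R : realType) (T : pseudoPMetricType R)
  (N M : nat) (S : 'I_N -> set T)
  (Res : 'I_N -> R -> (T -> R) -> T -> R)
  (kappa : 'I_N -> nat) (phi : forall i : 'I_N, 'I_(kappa i) -> T -> R)
  (p : forall i : 'I_N, 'I_(kappa i) -> {measure set (Borel T) -> \bar R}) :
  (* S_u = T is compact metrizable (hence separable), the disjoint union of
     the S_i, each S_i clopen in S_u *)
  hausdorff_space T -> compact [set: T] ->
  (forall i j : 'I_N, i != j -> S i `&` S j = set0) ->
  (\bigcup_(i in [set: 'I_N]) S i = [set: T]) ->
  (forall i, open (S i)) ->
  (1 <= M <= N)%N ->
  (* A_i generates a Feller semigroup on C(S_i), with resolvent Res i *)
  (forall i, feller_resolvent (S i) (Res i)) ->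
  (* A_1..A_M are not conservative, A_{M+1}..A_N are conservative *)
  (forall i : 'I_N, (i < M)%N -> ~ conservative (S i) (Res i)) ->
  (forall i : 'I_N, (M <= i)%N -> conservative (S i) (Res i)) ->
  (* for i in M: trivial kernel and regular Feller exit boundary *)
  (forall i : 'I_N, (i < M)%N -> trivial_kernel (S i) (Res i)) ->
  (forall (i : 'I_N) (j : 'I_(kappa i)), (i < M)%N ->
     [/\ {within S i, continuous phi i j},
         (forall x, S i x -> 0 <= phi i j x <= 1),
         (forall lam : R, 0 < lam -> forall x, S i x ->
            lam * Res i lam (phi i j) x <= phi i j x) &
         (forall lam : R, 0 < lam -> exists2 x, S i x &
            lam * Res i lam (phi i j) x != phi i j x)]) ->
  (forall i : 'I_N, (i < M)%N ->
     forall x, S i x -> \sum_(j < kappa i) phi i j x = 1) ->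
  (* p_{i,j} are Borel sub-probability measures on S_u *)
  (forall (i : 'I_N) (j : 'I_(kappa i)), (i < M)%N -> (p i j [set: T] <= 1)%E) ->
  (* conclusion *)
  feller_resolvent [set: T] (Rco M S Res phi p) /\
  ((forall (i : 'I_N) (j : 'I_(kappa i)), (i < M)%N -> p i j [set: T] = 1%E) ->
   conservative [set: T] (Rco M S Res phi p)).
Proof.
move=> _ compactT S_disj S_cover S_open _ feller _ conservative_ge _ exit_boundary
  phi_sum p_le1.
have phi_continuous (i : 'I_N) (j : 'I_(kappa i)) (i_lt_M : (i < M)%N) :
    {within S i, continuous phi i j}.
  by case: (exit_boundary i j i_lt_M).
have phi_excessive (i : 'I_N) (j : 'I_(kappa i)) (i_lt_M : (i < M)%N) lam :
    0 < lam -> forall x, S i x -> lam * Res i lam (phi i j) x <= phi i j x.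
  by case: (exit_boundary i j i_lt_M) => _ _ excessive _; exact: excessive.
by split; [exact: Rco_feller_resolvent|exact: Rco_conservative].
Qed.
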